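(* Let $n\geq 2$ and let $G_n$ be the graph whose vertices are the permutations of $[n]$, with $\sigma$ and $\tau$ adjacent iff there is no $k\in[n-1]$ with $\sigma^{-1}([k])=\tau^{-1}([k])$. Then $\chi(G_n)=n$ and the independence number of $G_n$ is $(n-1)!$. Moreover, if $\rho$ is the cyclic permutation $\rho(i)\equiv i+1 \pmod n$ and $H=\langle\rho\rangle$, then each right coset $H\sigma$ is a clique of size $n$ in $G_n$, so the vertex set of $G_n$ is partitioned into $(n-1)!$ cliques of size $n$.
   Context: $G_n$ is the Kneser graph of the permutohedron $\mathrm{Perm}_{n-1}$ (the convex hull of the permutations of $[n]$ as points of $\mathbb{R}^n$): its vertices are permutations, and two vertices are adjacent iff no facet of the permutohedron contains both; the facets correspond to nonempty proper subsets $S\subsetneq[n]$, the facet for $S$ containing exactly the permutations $\sigma$ with $\sigma(S)=[|S|]$. The claim is stated directly in terms of the combinatorial adjacency rule given. *)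

From mathcomp Require Import all_boot all_fingroup.
Set Implicit Arguments. Unset Strict Implicit. Unset Printing Implicit Defensive.

Section GraphNotions.
Variables (T : finType) (e : rel T).

Definition colorable (k : nat) : bool :=
  [exists c : {ffun T -> 'I_k}, forall x, forall y, e x y ==> (c x != c y)].

(* Chromatic number: the least k <= #|T| admitting a proper k-colouring
   (for irreflexive e, #|T| colours always suffice). *)
Definition chromatic_number : nat :=
  \big[minn/#|T|]_(k < #|T|.+1 | colorable k) k.

Definition independent (A : {set T}) : bool :=
  [forall x in A, forall y in A, ~~ e x y].

Definition independence_number : nat :=
  \max_(A : {set T} | independent A) #|A|.

Definition clique (A : {set T}) : bool :=
  [forall x in A, forall y in A, (x != y) ==> e x y].
End GraphNotions.

(* The graph G_n on permutations of [n] = 'I_n (0-indexed: [k] = {i | i < k}).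
   sigma^{-1}([k]) is the set of i with sigma i < k. *)
Definition preim_init n (s : 'S_n) (k : nat) : {set 'I_n} := [set i | s i < k].

Definition Gadj n : rel 'S_n := fun s t =>
  [forall k : 'I_n, (0 < k) ==> (preim_init s k != preim_init t k)].

Definition rho n : 'S_n := perm (@ordS_inj n).

(* The right coset H sigma = { h o sigma | h in H }, where (h o sigma)(i) =
   h (sigma i). In mathcomp, (sigma * h)%g i = h (sigma i), so h o sigma is
   written (sigma * h)%g. *)
Definition rcosetH n (s : 'S_n) : {set 'S_n} :=
  [set (s * h)%g | h in <[rho n]>%g].

Definition rcosetsH n : {set {set 'S_n}} := [set rcosetH s | s : 'S_n].

From mathcomp Require Import all_boot all_order all_fingroup cyclic zify.
Set Implicit Arguments. Unset Strict Implicit. Unset Printing Implicit Defensive.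

(* Precomposition with a permutation preserves adjacency, so the n-cycle
   rho generates a subgroup H all of whose right cosets are cliques as soon as
   1 is adjacent to every rotation rho^c, 0 < c < n; this holds because the
   preimage of [k] under rho^c is a cyclic interval of length k other than
   [k]. The n!/n = (n-1)! cosets partition the vertices, so every independent
   set has at most (n-1)! elements and every colouring needs n colours.
   Conversely, colouring sigma by sigma^-1(0) is proper (compare the
   preimages of [1]), and the permutations fixing 0 form an independent set
   meeting every coset. *)

Section CliquesAndColourings.
Variables (T : finType) (e : rel T).

Lemma clique_card_leq_colors (A : {set T}) k :
  clique e A -> colorable e k -> #|A| <= k.
Proof.
move=> /forallP cliqueA /existsP [c /forallP proper_c].
suff inj_c : {in A &, injective c} by have := leq_card_in _ _ inj_c; rewrite card_ord.
move=> x y xA yA cxy; apply/eqP; apply: contraT => x_neq_y.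
have /forallP/(_ y) := implyP (cliqueA x) xA.
rewrite yA x_neq_y /= => exy.
by have /forallP/(_ y)/implyP/(_ exy) := proper_c x; rewrite cxy eqxx.
Qed.

Lemma chromatic_number_clique (A : {set T}) :
  clique e A -> colorable e #|A| -> chromatic_number e = #|A|.
Proof.
move=> cliqueA colA; apply/eqP; rewrite eqn_leq; apply/andP; split.
  have A_lt : #|A| < #|T|.+1 by rewrite ltnS max_card.
  rewrite /chromatic_number -minEnat.
  exact: (@Order.TotalTheory.bigmin_le_cond _ _ _ #|T| (Ordinal A_lt)
            (colorable e) (fun k : 'I_#|T|.+1 => k : nat) colA).
apply: (big_ind (fun k => #|A| <= k)); first exact: max_card.
  by move=> i j Ai Aj; rewrite leq_min Ai Aj.
by move=> k /(clique_card_leq_colors cliqueA).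
Qed.

Variable P : {set {set T}}.
Hypotheses (partP : partition P [set: T])
           (cliqueP : {in P, forall B : {set T}, clique e B}).

Lemma independent_card_leq (A : {set T}) : independent e A -> #|A| <= #|P|.
Proof.
move=> /forallP indA; have /and3P [/eqP coverP trivP _] := partP.
have inP x : pblock P x \in P by rewrite pblock_mem ?coverP.
have inj : {in A &, injective (pblock P)}.
  move=> x y xA yA same; apply/eqP; apply: contraT => x_neq_y.
  have xB : x \in pblock P x by rewrite mem_pblock coverP.
  have yB : y \in pblock P x by rewrite same mem_pblock coverP.
  have /forallP/(_ x)/implyP/(_ xB)/forallP/(_ y)/implyP/(_ yB) := cliqueP (inP x).
  rewrite x_neq_y /= => exy.
  by have /implyP/(_ xA)/forallP/(_ y)/implyP/(_ yA) := indA x; rewrite exy.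
rewrite -(card_in_imset inj); apply: subset_leq_card.
by apply/subsetP => _ /imsetP [x _ ->].
Qed.

Lemma independence_number_clique_partition (A : {set T}) :
  independent e A -> {in P, forall B : {set T}, ~~ [disjoint B & A]} ->
  independence_number e = #|P|.
Proof.
move=> indA meetA; have /and3P [_ trivP _] := partP.
apply/eqP; rewrite eqn_leq; apply/andP; split.
  by apply/bigmax_leqP => B; apply: independent_card_leq.
apply: leq_trans (leq_bigmax_cond _ indA).
apply: leq_trans (leq_imset_card (pblock P) A); apply: subset_leq_card.
apply/subsetP => B BP; have /pred0Pn [x /andP [xB xA]] := meetA B BP.
by apply/imsetP; exists x; rewrite // (def_pblock trivP BP xB).
Qed.

End CliquesAndColourings.

Lemma lcosets_partition (gT : finGroupType) (G : {group gT}) :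
  partition (lcosets G [set: gT]) [set: gT].
Proof.
have <- : orbit 'R G @: [set: gT] = lcosets G [set: gT].
  by apply: eq_imset => x; rewrite orbitR lcosetE.
by apply: orbit_partition; apply/actsP => a _ x; rewrite !inE.
Qed.

Section RotationCosets.
Variable n : nat.
Implicit Types s x y : 'S_n.
Local Open Scope group_scope.

Lemma preim_init_mull s x k : preim_init (s * x) k = s @^-1: preim_init x k.
Proof. by apply/setP => i; rewrite !inE permM. Qed.

Lemma Gadj_mul2l s x y : Gadj (s * x) (s * y) = Gadj x y.
Proof.
have preim_inj (A B : {set 'I_n}) : (s @^-1: A == s @^-1: B) = (A == B).
  apply/eqP/eqP => [/setP AB | -> //]; apply/setP => i.
  by have := AB (s^-1 i); rewrite !inE permKV.
by apply: eq_forallb => k; rewrite !preim_init_mull preim_inj.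
Qed.

Lemma clique_lcoset (H : {group 'S_n}) s :
  {in H, forall h, h != 1 -> Gadj 1 h} -> clique (@Gadj n) (s *: H).
Proof.
move=> cliqueH; apply/forallP => x; apply/implyP; rewrite mem_lcoset => xH.
apply/forallP => y; apply/implyP; rewrite mem_lcoset => yH.
apply/implyP => x_neq_y; rewrite -[x]mulg1 -[y](mulKVg x) Gadj_mul2l.
apply: cliqueH; last by rewrite -eq_mulVg1.
by rewrite -[x](mulKVg s) invMg -mulgA groupM ?groupV.
Qed.

Lemma rhoX_val a (i : 'I_n) : (rho n ^+ a) i = (i + a) %% n :> nat.
Proof.
elim: a => [|a IH]; first by rewrite expg0 perm1 addn0 modn_small.
by rewrite expgSr permM /rho permE /= IH -addn1 modnDml addn1 addnS.
Qed.

Lemma order_rho : 0 < n -> #[rho n] = n.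
Proof.
move=> n_gt0; apply/eqP; rewrite eqn_dvd order_dvdn; apply/andP; split.
  by apply/eqP/permP => i; apply: val_inj; rewrite perm1 /= rhoX_val modnDr modn_small.
have /(congr1 (fun p : 'S_n => p (Ordinal n_gt0) : nat)) := expg_order (rho n).
by rewrite rhoX_val perm1 add0n => /eqP.
Qed.

Lemma rcosetHE s : rcosetH s = s *: <[rho n]>.
Proof. by rewrite -lcosetE. Qed.

Lemma rcosetsHE : rcosetsH n = lcosets <[rho n]> [set: 'S_n].
Proof.
by apply/setP => B; apply/imsetP/imsetP => -[s _ ->]; exists s; rewrite ?rcosetHE ?lcosetE.
Qed.

Lemma card_rcosetsH : 0 < n -> #|rcosetsH n| = n.-1`!.
Proof.
move=> n_gt0; have := Lagrange (subsetT <[rho n]>).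
rewrite cardsT card_Sn -card_lcosets -rcosetsHE [#|<[_]>|]order_rho //.
by rewrite -(prednK n_gt0) factS => /eqP; rewrite eqn_pmul2l // => /eqP.
Qed.

End RotationCosets.

Section AtLeastTwoPoints.
Variable m : nat.
Local Notation n := m.+2.
Implicit Types s t : 'S_n.
Local Open Scope group_scope.

Lemma Gadj_1_rhoX c : 0 < c < n -> Gadj 1 (rho n ^+ c).
Proof.
case/andP=> c_gt0 c_ltn; apply/forallP => k; apply/implyP => k_gt0.
have k_ltn := ltn_ord k.
apply/negP => /eqP /setP E; have [c_lek | k_ltc] := leqP c k.
  have := E ord_max; rewrite !inE perm1 rhoX_val /=.
  have -> : m.+1 + c = c.-1 + n by lia.
  rewrite modnDr modn_small; last by lia.
  have -> : c.-1 < k by lia.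
  by have -> : (m.+1 < k) = false by lia.
have := E ord0; rewrite !inE perm1 rhoX_val /= add0n modn_small // k_gt0.
by rewrite ltnNge ltnW.
Qed.

Lemma Gadj_1_cycle h : h \in <[rho n]> -> h != 1 -> Gadj 1 h.
Proof.
case/cyclePmin=> c; rewrite order_rho // => c_ltn -> rhoc_neq1.
apply: Gadj_1_rhoX; rewrite c_ltn andbT lt0n.
by apply: contraNneq rhoc_neq1 => ->; rewrite expg0.
Qed.

Lemma preim_init1 s : preim_init s 1 = [set (s^-1) ord0].
Proof.
by apply/setP => i; rewrite !inE ltnS leqn0 -(inj_eq (@perm_inj _ s)) permKV.
Qed.

Lemma Gadj_invg_ord0 s t : Gadj s t -> (s^-1) ord0 != (t^-1) ord0.
Proof.
move/forallP/(_ (@Ordinal n 1 isT))/implyP/(_ isT).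
by rewrite !preim_init1; apply: contraNneq => ->.
Qed.

Lemma colorable_Gadj : colorable (@Gadj n) n.
Proof.
apply/existsP; exists [ffun s : 'S_n => (s^-1) ord0].
apply/forallP => s; apply/forallP => t.
by apply/implyP => /Gadj_invg_ord0; rewrite !ffunE.
Qed.

Definition stab0 : {set 'S_n} := [set s : 'S_n | s ord0 == ord0].

Lemma independent_stab0 : independent (@Gadj n) stab0.
Proof.
have inv0 s : s \in stab0 -> (s^-1) ord0 = ord0.
  by rewrite inE => /eqP {1}<-; rewrite permK.
apply/forallP => s; apply/implyP => /inv0 s0.
apply/forallP => t; apply/implyP => /inv0 t0.
by apply: contraL (@Gadj_invg_ord0 s t) _; rewrite s0 t0 eqxx.
Qed.

Lemma lcoset_meets_stab0 s : ~~ [disjoint s *: <[rho n]> & stab0].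
Proof.
apply/pred0Pn; exists (s * rho n ^+ (n - s ord0)); rewrite /= inE.
rewrite mem_lcoset mulKg mem_cycle; apply/eqP/val_inj.
by rewrite permM /= rhoX_val subnKC ?modnn // ltnW.
Qed.

End AtLeastTwoPoints.

Theorem mainTheorem17 (n : nat) (hn : 2 <= n) :
  [/\ chromatic_number (@Gadj n) = n,
      independence_number (@Gadj n) = n.-1`!,
      (forall s : 'S_n, clique (@Gadj n) (rcosetH s) /\ #|rcosetH s| = n),
      partition (@rcosetsH n) [set: 'S_n]
    & #|@rcosetsH n| = n.-1`!].
Proof.
case: n hn => [|[|m]] // _.
have clique_coset (s : 'S_m.+2) : clique (@Gadj m.+2) (rcosetH s).
  by rewrite rcosetHE; apply/clique_lcoset/Gadj_1_cycle.
have card_coset (s : 'S_m.+2) : #|rcosetH s| = m.+2.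
  by rewrite rcosetHE card_lcoset -orderE order_rho.
have partH : partition (rcosetsH m.+2) [set: 'S_m.+2].
  by rewrite rcosetsHE; apply: lcosets_partition.
have cliquesH : {in rcosetsH m.+2, forall B, clique (@Gadj m.+2) B}.
  by move=> _ /imsetP [s _ ->].
split=> //; last exact: card_rcosetsH.
- have := chromatic_number_clique (clique_coset 1%g).
  by rewrite card_coset; apply; apply: colorable_Gadj.
- rewrite -card_rcosetsH //.
  apply: (independence_number_clique_partition partH cliquesH (@independent_stab0 m)).
  by move=> _ /imsetP [s _ ->]; rewrite rcosetHE lcoset_meets_stab0.
Qed.
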